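(* Let $A$ be a synaptic algebra, let $p,q\in P$, and define $p_r:=p\wedge(p^{\perp}\vee q)\wedge(p^{\perp}\vee q^{\perp})\in P$. Then: (i) $p=((p\wedge q)\vee(p\wedge q^{\perp}))\oplus p_r=(p\wedge q)\vee(p\wedge q^{\perp})\vee p_r=(p\wedge q)\oplus(p\wedge q^{\perp})\oplus p_r$; (ii) $0\le p_r\le p$ and $p-p_r=(p\wedge q)\vee(p\wedge q^{\perp})$; (iii) $pCq$ iff $p_r=0$.
   Context: Synaptic algebra (Foulis): $R$ is a real linear associative algebra with unit $1$, and $A\subseteq R$ is a real linear subspace with $1\in A$. For $a,b\in A$ write $aCb$ iff $ab=ba$; $C(a):=\{b\in A: aCb\}$; $CC(a):=\{b\in A: bCd \text{ for all } d\in C(a)\}$. $A$ is a synaptic algebra with enveloping algebra $R$ iff: (SA1) $A$ is a partially ordered archimedean real linear space with positive cone $A^+$, $1$ is an order unit, $\|\cdot\|$ the order-unit norm; (SA2) $a\in A\Rightarrow a^2\in A^+$; (SA3) $a,b\in A^+\Rightarrow aba\in A^+$; (SA4) if $a\in A$, $b\in A^+$, $aba=0$ then $ab=ba=0$; (SA5) if $a\in A^+$ there is $b\in A^+\cap CC(a)$ with $b^2=a$; (SA6) for $a\in A$ there is $p=p^2\in A$ with $ab=0\Leftrightarrow pb=0$ for all $b\in A$; (SA7) if $1\le a$ there is $b\in A$ with $ab=ba=1$; (SA8) if $a,b\in A$, $a_1\le a_2\le\cdots$ are pairwise commuting elements of $C(b)$ with $\|a-a_n\|\to0$, then $a\in C(b)$.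 $A$ is nondegenerate ($1\neq 0$). $P:=\{p\in A:p=p^2\}$ with the order inherited from $A$ is an orthomodular lattice with orthocomplement $p^{\perp}:=1-p$, meet $\wedge$, join $\vee$. Projections $p,q$ are orthogonal iff $p\le q^{\perp}$, and then $p\oplus q:=p+q$ (orthosum). *)

From mathcomp Require Import all_boot all_order all_algebra.
From mathcomp Require Import reals.
Set Implicit Arguments. Unset Strict Implicit. Unset Printing Implicit Defensive.
Import Order.TTheory GRing.Theory Num.Theory.
Local Open Scope ring_scope.

Section Synaptic.
Variables (R : realType) (E : algType R).
Variables (A Apos : {pred E}).

Definition sle (a b : E) : Prop := (b - a) \in Apos.

Definition scomm (a b : E) : Prop := a * b = b * a.

Definition in_CC (a b : E) : Prop :=
  b \in A /\ forall d, d \in A -> scomm a d -> scomm b d.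

(* order-unit-norm convergence  || a - s n || -> 0 , unfolded:
   for every eps > 0, eventually  -eps*1 <= a - s n <= eps*1 *)
Definition ou_conv (s : nat -> E) (a : E) : Prop :=
  forall eps : R, 0 < eps -> exists N : nat, forall n : nat, (N <= n)%N ->
    sle (- (eps *: 1)) (a - s n) /\ sle (a - s n) (eps *: 1).

Record synaptic : Prop := {
  sa_lin : forall (c : R) a b, a \in A -> b \in A -> c *: a + b \in A;
  sa_one : (1 : E) \in A;
  sa_pos_sub : forall a, a \in Apos -> a \in A;
  sa_pos0 : (0 : E) \in Apos;
  sa_posD : forall a b, a \in Apos -> b \in Apos -> a + b \in Apos;
  sa_posZ : forall (c : R) a, 0 <= c -> a \in Apos -> c *: a \in Apos;
  sa_pos_antisym : forall a, a \in Apos -> - a \in Apos -> a = 0;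
  sa_archimedean : forall a b, a \in A -> b \in A ->
      (forall n : nat, sle (n%:R *: a) b) -> sle a 0;
  sa_order_unit : forall a, a \in A ->
      exists n : nat, sle (- (n%:R *: 1)) a /\ sle a (n%:R *: 1);
  sa2 : forall a, a \in A -> a * a \in Apos;
  sa3 : forall a b, a \in Apos -> b \in Apos -> a * b * a \in Apos;
  sa4 : forall a b, a \in A -> b \in Apos -> a * b * a = 0 ->
      a * b = 0 /\ b * a = 0;
  sa5 : forall a, a \in Apos ->
      exists b, [/\ b \in Apos, in_CC a b & b * b = a];
  sa6 : forall a, a \in A ->
      exists p, [/\ p \in A, p * p = p &
                 forall b, b \in A -> (a * b = 0 <-> p * b = 0)];
  sa7 : forall a, a \in A -> sle 1 a ->
      exists b, [/\ b \in A, a * b = 1 & b * a = 1];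
  sa8 : forall (a b : E) (s : nat -> E), a \in A -> b \in A ->
      (forall n, s n \in A) ->
      (forall n, sle (s n) (s n.+1)) ->
      (forall n m, scomm (s n) (s m)) ->
      (forall n, scomm (s n) b) ->
      ou_conv s a -> scomm a b;
  sa_nondeg : (1 : E) != 0
}.

Definition proj (p : E) : Prop := p \in A /\ p * p = p.

Definition perpP (p : E) : E := 1 - p.

Definition is_meetP (p q r : E) : Prop :=
  [/\ proj r, sle r p, sle r q &
      forall s, proj s -> sle s p -> sle s q -> sle s r].

Definition is_joinP (p q r : E) : Prop :=
  [/\ proj r, sle p r, sle q r &
      forall s, proj s -> sle p s -> sle q s -> sle r s].

Definition orthP (p q : E) : Prop := sle p (perpP q).

End Synaptic.

(* The meets p /\ q and p /\ q^perp are orthogonal subprojections of p, hence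
   commute with p and with each other, so every lattice operation appearing in
   p_r is computed algebraically: meets of commuting projections are products
   and joins of orthogonal projections are sums.  Complementing the joins
   p^perp \/ q and p^perp \/ q^perp gives 1 - (p /\ q^perp) and 1 - (p /\ q),
   and multiplying out yields p_r = p - (p /\ q) - (p /\ q^perp).  If p and q
   commute then p /\ q = pq and p /\ q^perp = p - pq, so p_r = 0; conversely
   p_r = 0 writes p as a sum of projections commuting with q. *)
From mathcomp Require Import all_boot all_order all_algebra.
From mathcomp Require Import reals.
Import Order.TTheory GRing.Theory Num.Theory.
Local Open Scope ring_scope.
Set Implicit Arguments. Unset Strict Implicit. Unset Printing Implicit Defensive.

Lemma perpPK (R : realType) (E : algType R) (a : E) : perpP (perpP a) = a.
Proof. exact: subKr. Qed.

Lemma sle_perpP (R : realType) (E : algType R) (Apos : {pred E}) (a b : E) :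
  sle Apos a b -> sle Apos (perpP b) (perpP a).
Proof. by rewrite /sle /perpP => Hab; rewrite opprB addrC addrA subrK. Qed.

Section Projections.
Variables (R : realType) (E : algType R) (A Apos : {pred E}).
Hypothesis HA : synaptic A Apos.

Lemma memA_add (a b : E) : a \in A -> b \in A -> a + b \in A.
Proof. by move=> Ha Hb; have := sa_lin HA 1 Ha Hb; rewrite scale1r. Qed.

Lemma memA_sub (a b : E) : a \in A -> b \in A -> a - b \in A.
Proof. by move=> Ha Hb; have := sa_lin HA (-1) Hb Ha; rewrite scaleN1r addrC. Qed.

Lemma proj_pos (p : E) : proj A p -> p \in Apos.
Proof. by case=> Hp pp; have := sa2 HA Hp; rewrite pp. Qed.

Lemma proj_perpP (p : E) : proj A p -> proj A (perpP p).
Proof.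
case=> Hp pp; split; first exact: memA_sub (sa_one HA) Hp.
by rewrite /perpP mulrBl !mulrBr !(mul1r, mulr1) pp subrr subr0.
Qed.

Lemma sle_antisym (a b : E) : sle Apos a b -> sle Apos b a -> a = b.
Proof.
rewrite /sle => Hab Hba; apply/esym/subr0_eq/(sa_pos_antisym HA Hab).
by rewrite opprB.
Qed.

(* For projections the order is absorption: e <= f iff fe = e = ef.  The hard
   direction uses SA4 on (1 - f) e (1 - f), which is both >= 0 and <= 0. *)
Lemma proj_leP (e f : E) : proj A e -> proj A f ->
  sle Apos e f <-> f * e = e /\ e * f = e.
Proof.
move=> He Hf; split=> [Hef | [fe ef]]; last first.
  apply: proj_pos; split; first exact: memA_sub Hf.1 He.1.
  by rewrite mulrBl !mulrBr Hf.2 He.2 fe ef opprB subrr addr0.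
have Hf' := proj_pos (proj_perpP Hf).
have sandwich0 : perpP f * e * perpP f = 0.
  apply: (sa_pos_antisym HA (sa3 HA Hf' (proj_pos He))).
  have := sa3 HA Hf' Hef; rewrite /perpP [(1 - f) * (f - e)]mulrBr.
  by rewrite [(1 - f) * f]mulrBl mul1r Hf.2 subrr sub0r mulNr.
have [fe0 ef0] := sa4 HA (proj_perpP Hf).1 (proj_pos He) sandwich0.
split; apply/esym/subr0_eq; first by rewrite -fe0 /perpP mulrBl mul1r.
by rewrite -ef0 /perpP mulrBr mulr1.
Qed.

Lemma proj_le_perpP_mul0 (e f : E) : proj A e -> proj A f ->
  sle Apos e (perpP f) -> f * e = 0 /\ e * f = 0.
Proof.
move=> He Hf /(proj_leP He (proj_perpP Hf)) [fe ef]; split.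
  by rewrite -[f * e](subKr e) -{2}[e]mul1r -mulrBl fe subrr.
by rewrite -[e * f](subKr e) -{2}[e]mulr1 -mulrBr ef subrr.
Qed.

Lemma meetP_uniq (a b r r' : E) :
  is_meetP A Apos a b r -> is_meetP A Apos a b r' -> r = r'.
Proof. by case=> Pr ra rb Hr [Pr' ra' rb' Hr']; apply: sle_antisym; auto. Qed.

Lemma joinP_uniq (a b r r' : E) :
  is_joinP A Apos a b r -> is_joinP A Apos a b r' -> r = r'.
Proof. by case=> Pr ar br Hr [Pr' ar' br' Hr']; apply: sle_antisym; auto. Qed.

Lemma joinP_perpP (a b r : E) : is_joinP A Apos a b r ->
  is_meetP A Apos (perpP a) (perpP b) (perpP r).
Proof.
case=> Pr ar br Hr; split; [exact: proj_perpP | exact: sle_perpP ..|].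
move=> s Ps sa sb; rewrite -[s]perpPK; apply: sle_perpP.
by apply: Hr; [exact: proj_perpP | rewrite -[a]perpPK | rewrite -[b]perpPK];
  apply: sle_perpP.
Qed.

(* The product of commuting projections lies in A because it is half of
   (p + q)^2 - (p + q). *)
Lemma proj_mulC_memA (p q : E) : proj A p -> proj A q -> p * q = q * p ->
  p * q \in A.
Proof.
move=> Hp Hq pqC; have Hs := memA_add Hp.1 Hq.1.
have sq : (p + q) * (p + q) - (p + q) = (p * q) *+ 2.
  rewrite mulrDr !mulrDl Hp.2 Hq.2 -pqC [p * q + q]addrC addrACA.
  by rewrite [_ - (p + q)]addrC addKr mulr2n.
have := sa_lin HA 2^-1 (memA_sub (sa_pos_sub HA (sa2 HA Hs)) Hs)
  (sa_pos_sub HA (sa_pos0 HA)).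
by rewrite addr0 sq -scaler_nat scalerA mulVf ?pnatr_eq0 // scale1r.
Qed.

Lemma meetP_mulC (a b : E) : proj A a -> proj A b -> a * b = b * a ->
  is_meetP A Apos a b (a * b).
Proof.
move=> Ha Hb abC.
have aab : a * (a * b) = a * b by rewrite mulrA Ha.2.
have abb : a * b * b = a * b by rewrite -mulrA Hb.2.
have aba : a * b * a = a * b by rewrite -mulrA -abC aab.
have bab : b * (a * b) = a * b by rewrite abC mulrA Hb.2.
have Pab : proj A (a * b).
  by split; [exact: proj_mulC_memA | rewrite mulrA aba abb].
split=> //; [exact/(proj_leP Pab Ha) | exact/(proj_leP Pab Hb) |].
move=> s Ps /(proj_leP Ps Ha) [as_ sa] /(proj_leP Ps Hb) [bs sb].
by apply/(proj_leP Ps Pab); rewrite -mulrA bs as_ mulrA sa sb.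
Qed.

Lemma proj_mul0C (a b : E) : proj A a -> proj A b -> a * b = 0 -> b * a = 0.
Proof.
move=> Ha Hb ab0; have aba0 : a * b * a = 0 by rewrite ab0 mul0r.
exact: (sa4 HA Ha.1 (proj_pos Hb) aba0).2.
Qed.

Lemma proj_add_orth (a b : E) : proj A a -> proj A b -> a * b = 0 ->
  proj A (a + b).
Proof.
move=> Ha Hb ab0; split; first exact: memA_add Ha.1 Hb.1.
by rewrite mulrDl !mulrDr Ha.2 Hb.2 ab0 proj_mul0C // addr0 add0r.
Qed.

Lemma orthP_mul0 (a b : E) : proj A a -> proj A b -> a * b = 0 ->
  orthP Apos a b.
Proof.
move=> Ha Hb ab0; have := proj_pos (proj_perpP (proj_add_orth Ha Hb ab0)).
by rewrite /orthP /sle /perpP addrAC -addrA -opprD.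
Qed.

Lemma joinP_add_orth (a b : E) : proj A a -> proj A b -> a * b = 0 ->
  is_joinP A Apos a b (a + b).
Proof.
move=> Ha Hb ab0; have ba0 := proj_mul0C Ha Hb ab0.
have Pab := proj_add_orth Ha Hb ab0.
split=> //.
- by apply/(proj_leP Ha Pab); rewrite mulrDl mulrDr Ha.2 ab0 ba0 !addr0.
- by apply/(proj_leP Hb Pab); rewrite mulrDl mulrDr Hb.2 ab0 ba0 !add0r.
move=> s Ps /(proj_leP Ha Ps) [sa as_] /(proj_leP Hb Ps) [sb bs].
by apply/(proj_leP Pab Ps); rewrite mulrDl mulrDr sa sb as_ bs.
Qed.

Lemma joinP_perpP_meetP (a b r m : E) : is_joinP A Apos (perpP a) b r ->
  is_meetP A Apos a (perpP b) m -> r = perpP m.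
Proof.
move=> /joinP_perpP; rewrite perpPK => Hr Hm.
by rewrite -[r]perpPK (meetP_uniq Hr Hm).
Qed.

Section MeetsWithComplement.
Variables p q pq pqc : E.
Hypotheses (Hp : proj A p) (Hq : proj A q).
Hypotheses (Hpq : is_meetP A Apos p q pq).
Hypotheses (Hpqc : is_meetP A Apos p (perpP q) pqc).

Let Ppq : proj A pq. Proof. by case: Hpq. Qed.
Let Ppqc : proj A pqc. Proof. by case: Hpqc. Qed.

Let p_pq : p * pq = pq /\ pq * p = pq.
Proof. by apply/proj_leP => //; case: Hpq. Qed.

Let p_pqc : p * pqc = pqc /\ pqc * p = pqc.
Proof. by apply/proj_leP => //; case: Hpqc. Qed.

Let q_pq : q * pq = pq /\ pq * q = pq.
Proof. by apply/proj_leP => //; case: Hpq. Qed.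

Let q_pqc : q * pqc = 0 /\ pqc * q = 0.
Proof. by apply: proj_le_perpP_mul0 => //; case: Hpqc. Qed.

Lemma meets_mul0 : pq * pqc = 0.
Proof. by rewrite -q_pq.2 -mulrA q_pqc.1 mulr0. Qed.

Lemma meets_add_le : sle Apos (pq + pqc) p.
Proof.
apply/(proj_leP (proj_add_orth Ppq Ppqc meets_mul0) Hp).
by rewrite mulrDr mulrDl p_pq.1 p_pqc.1 p_pq.2 p_pqc.2.
Qed.

Lemma joinP_meets_eq (j : E) : is_joinP A Apos pq pqc j -> j = pq + pqc.
Proof. by move/joinP_uniq; apply; apply: joinP_add_orth meets_mul0. Qed.

Lemma pr_eq_sub_join (j u v w pr : E) :
  is_joinP A Apos pq pqc j ->
  is_joinP A Apos (perpP p) q u -> is_joinP A Apos (perpP p) (perpP q) v ->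
  is_meetP A Apos p u w -> is_meetP A Apos w v pr -> pr = p - j.
Proof.
move=> /joinP_meets_eq -> Hu Hv Hw Hpr.
have pqc_pq : pqc * pq = 0 by apply: proj_mul0C meets_mul0.
have Hpq' : is_meetP A Apos p (perpP (perpP q)) pq by rewrite perpPK.
rewrite (joinP_perpP_meetP Hu Hpqc) in Hw.
rewrite (joinP_perpP_meetP Hv Hpq') in Hpr.
have w_mul : p * perpP pqc = perpP pqc * p.
  by rewrite /perpP mulrBr mulrBl mulr1 mul1r p_pqc.1 p_pqc.2.
have Ew : w = p - pqc.
  rewrite (meetP_uniq Hw (meetP_mulC Hp (proj_perpP Ppqc) w_mul)).
  by rewrite /perpP mulrBr mulr1 p_pqc.1.
have Pw : proj A w by case: Hw.
have w_pq : w * pq = pq by rewrite Ew mulrBl p_pq.1 pqc_pq subr0.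
have pq_w : pq * w = pq by rewrite Ew mulrBr p_pq.2 meets_mul0 subr0.
have pr_mul : w * perpP pq = perpP pq * w.
  by rewrite /perpP mulrBr mulrBl mulr1 mul1r w_pq pq_w.
rewrite (meetP_uniq Hpr (meetP_mulC Pw (proj_perpP Ppq) pr_mul)).
by rewrite /perpP mulrBr mulr1 w_pq Ew opprD addrA addrAC.
Qed.

Lemma scomm_meets : scomm p q <-> p = pq + pqc.
Proof.
split=> [pqC | ->]; last first.
  by rewrite /scomm mulrDl mulrDr q_pq.1 q_pq.2 q_pqc.1 q_pqc.2.
have pqcC : p * perpP q = perpP q * p.
  by rewrite /perpP mulrBr mulrBl mulr1 mul1r pqC.
rewrite (meetP_uniq Hpq (meetP_mulC Hp Hq pqC)).
rewrite (meetP_uniq Hpqc (meetP_mulC Hp (proj_perpP Hq) pqcC)).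
by rewrite /perpP mulrBr mulr1 subrKC.
Qed.

End MeetsWithComplement.

End Projections.

Theorem theorem2p2 (R : realType) (E : algType R) (A Apos : {pred E})
  (HA : synaptic A Apos)
  (p q pq pqc j u v w pr k : E)
  (Hp : proj A p) (Hq : proj A q)
  (Hpq : is_meetP A Apos p q pq)                       (* pq  = p /\ q        *)
  (Hpqc : is_meetP A Apos p (perpP q) pqc)             (* pqc = p /\ q^perp   *)
  (Hj : is_joinP A Apos pq pqc j)                      (* j = pq \/ pqc       *)
  (Hu : is_joinP A Apos (perpP p) q u)                 (* u = p^perp \/ q     *)
  (Hv : is_joinP A Apos (perpP p) (perpP q) v)         (* v = p^perp \/ q^perp *)
  (Hw : is_meetP A Apos p u w)                         (* w = p /\ u          *)
  (Hpr : is_meetP A Apos w v pr)                       (* p_r = w /\ v        *)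
  (Hk : is_joinP A Apos j pr k) :                      (* k = j \/ p_r        *)
  (* (i) *)
  ((orthP Apos j pr /\ p = j + pr) /\
   p = k /\
   (orthP Apos pq pqc /\ orthP Apos (pq + pqc) pr /\ p = pq + pqc + pr))
  /\
  (* (ii) *)
  ((sle Apos 0 pr /\ sle Apos pr p) /\ p - pr = j)
  /\
  (* (iii) *)
  (scomm p q <-> pr = 0).
Proof.
have Ej := joinP_meets_eq HA Hq Hpq Hpqc Hj.
have Epr := pr_eq_sub_join HA Hp Hq Hpq Hpqc Hj Hu Hv Hw Hpr.
have [[Ppq _ _ _] [Ppqc _ _ _]] := (Hpq, Hpqc).
have [[Pj _ _ _] [Ppr _ _ _]] := (Hj, Hpr).
have j_le_p : sle Apos j p by rewrite Ej; apply: (meets_add_le HA Hp Hq Hpq Hpqc).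
have [_ j_p] := (proj_leP HA Pj Hp).1 j_le_p.
have j_pr : j * pr = 0 by rewrite Epr mulrBr j_p Pj.2 subrr.
have Ep : p = j + pr by rewrite Epr subrKC.
have Ejp : p - pr = j by rewrite {1}Ep addrK.
have O_j_pr := orthP_mul0 HA Pj Ppr j_pr.
split; [split; [by [] | split] | split].
- by rewrite {1}Ep; apply: (joinP_uniq HA (joinP_add_orth HA Pj Ppr j_pr) Hk).
- rewrite -Ej -Ep; split=> //.
  exact: (orthP_mul0 HA Ppq Ppqc (meets_mul0 HA Hq Hpq Hpqc)).
- by rewrite /sle subr0 Ejp; split=> //; split; exact: (proj_pos HA).
rewrite (scomm_meets HA Hp Hq Hpq Hpqc) -Ej Epr.
by split=> [-> | /subr0_eq]; rewrite ?subrr.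
Qed.
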